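(* Let $z_0\in\mathbb C\setminus\{0\}$ and let $S_n=z_0+\sum_{j=1}^nX_j$, where $X_1,X_2,\dots$ are i.i.d. with $\mathbf P(X_1=\sqrt2)=\mathbf P(X_1=-\sqrt2)=\mathbf P(X_1=i\sqrt2)=\mathbf P(X_1=-i\sqrt2)=1/4$. Let $\Theta(n)=\sum_{k=1}^n\phi(k)$, where $\phi(k)=0$ if $S_{k-1},S_k$ and $0$ are collinear, and otherwise $\phi(k)$ is the unique number in $(-\pi,\pi)$ with $\frac{S_{k-1}}{|S_{k-1}|}e^{i\phi(k)}=\frac{S_k}{|S_k|}$. Then there is a constant $C$ (independent of $z_0$ and $n$) such that for all $n\ge2$, $$\mathbf E\sup_{1\le k\le n}|\Theta(k)|^2\le C\log^2n.$$ *)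

(* complex numbers represented as pairs (x, y) = x + i y. *)
From Stdlib Require Import Reals Lra List ClassicalEpsilon.
Import ListNotations.
Open Scope R_scope.

Definition pt := (R * R)%type.

Definition step (d : nat) : pt :=
  match d with
  | O => (sqrt 2, 0)
  | 1%nat => (- sqrt 2, 0)
  | 2%nat => (0, sqrt 2)
  | _ => (0, - sqrt 2)
  end.

Definition padd (u v : pt) : pt := (fst u + fst v, snd u + snd v).

(* S_k = z0 + X_1 + ... + X_k, where xs lists the step labels X_1, X_2, ... *)
Definition walk (z0 : pt) (xs : list nat) (k : nat) : pt :=
  fold_left padd (map step (firstn k xs)) z0.

Definition cnorm (u : pt) : R := sqrt (fst u ^ 2 + snd u ^ 2).
Definition cunit (u : pt) : pt := (fst u / cnorm u, snd u / cnorm u).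
(* multiplication by e^{i t} *)
Definition rot (t : R) (u : pt) : pt :=
  (cos t * fst u - sin t * snd u, sin t * fst u + cos t * snd u).
(* u, v and 0 are collinear iff the cross product vanishes *)
Definition cross (u v : pt) : R := fst u * snd v - snd u * fst v.

Definition phi (z0 : pt) (xs : list nat) (k : nat) : R :=
  let u := walk z0 xs (k - 1) in
  let v := walk z0 xs k in
  match Req_EM_T (cross u v) 0 with
  | left _ => 0
  | right _ => epsilon (inhabits 0)
                 (fun t => -PI < t < PI /\ rot t (cunit u) = cunit v)
  end.

Fixpoint Theta (z0 : pt) (xs : list nat) (n : nat) : R :=
  match n with
  | O => 0
  | S m => Theta z0 xs m + phi z0 xs n
  end.

Definition supTheta2 (z0 : pt) (xs : list nat) (n : nat) : R :=
  fold_left (fun acc k => Rmax acc (Rabs (Theta z0 xs k) ^ 2)) (seq 1 n) 0.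

Fixpoint allseqs (n : nat) : list (list nat) :=
  match n with
  | O => [nil]
  | S m => flat_map (fun s => map (fun d => d :: s) [0%nat; 1%nat; 2%nat; 3%nat]) (allseqs m)
  end.

(* expectation of a functional of (X_1..X_n), X_i i.i.d. uniform on the 4 steps *)
Definition Expect (n : nat) (f : list nat -> R) : R :=
  fold_right Rplus 0 (map f (allseqs n)) / 4 ^ n.

From Stdlib Require Import Reals Lra Lia Psatz List ClassicalEpsilon.
Import ListNotations.
Open Scope R_scope.

(* Let M_n = max_{k <= n} |Theta k|.  A pathwise form of Doob's inequality bounds M_n^2 by
   4 Theta(n)^2 - 4 sum_i M_i (|Theta (i+1)| - |Theta i|); conditioning on the first i steps,
   each summand has expectation at most E [12 M_n |D(S_i)| + 4 V(S_i)], where D(y) and V(y) are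
   the mean and the mean square of the angle turned by one step from y.  The symmetry of the
   four steps makes D(y) = O(|y|^-4), while V(y) = O(|y|^-2).  Both are dominated by the
   one-step increments of the Lyapunov functions ln (2 + |y|^2) and ln (3 + |y|^2)^2, whose
   expectations along the walk grow like log n and log^2 n.  Hence E sum_t |D(S_t)| = O(log n)
   from every starting point, so E (sum_t |D(S_t)|)^2 = O(log^2 n), and E sum_t V(S_t) =
   O(log^2 n); absorbing M_n by AM-GM gives E M_n^2 = O(log^2 n). *)

(** * Expectation over step sequences *)

Definition avg4 (F : nat -> R) : R := (F 0%nat + F 1%nat + F 2%nat + F 3%nat) / 4.

Lemma avg4_ext F G : (forall d, F d = G d) -> avg4 F = avg4 G.
Proof. intros H; unfold avg4; rewrite !H; reflexivity. Qed.

Lemma avg4_le F G : (forall d, F d <= G d) -> avg4 F <= avg4 G.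
Proof.
  intros H; unfold avg4.
  pose proof (H 0%nat); pose proof (H 1%nat); pose proof (H 2%nat); pose proof (H 3%nat); lra.
Qed.

Lemma sum_map_flat_cons4 (f : list nat -> R) (l : list (list nat)) :
  fold_right Rplus 0
    (map f (flat_map (fun s => map (fun d => d :: s) [0%nat; 1%nat; 2%nat; 3%nat]) l))
  = fold_right Rplus 0 (map (fun s => f (0%nat :: s)) l)
    + fold_right Rplus 0 (map (fun s => f (1%nat :: s)) l)
    + fold_right Rplus 0 (map (fun s => f (2%nat :: s)) l)
    + fold_right Rplus 0 (map (fun s => f (3%nat :: s)) l).
Proof. induction l as [|s l IH]; simpl in *; [ring|]. rewrite IH; ring. Qed.

Lemma Expect_nil f : Expect 0 f = f nil.
Proof. unfold Expect; simpl; field. Qed.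

Lemma Expect_S m f : Expect (S m) f = avg4 (fun d => Expect m (fun s => f (d :: s))).
Proof.
  unfold Expect, avg4; simpl allseqs; rewrite sum_map_flat_cons4.
  assert (0 < 4 ^ m) by (apply pow_lt; lra).
  simpl pow; field; lra.
Qed.

Lemma Expect_le_length n f g :
  (forall xs, length xs = n -> f xs <= g xs) -> Expect n f <= Expect n g.
Proof.
  revert f g; induction n as [|n IH]; intros f g H.
  - rewrite !Expect_nil; apply H; reflexivity.
  - rewrite !Expect_S; apply avg4_le; intro d; apply IH; intros; apply H; simpl; lia.
Qed.

Lemma Expect_ext_length n f g :
  (forall xs, length xs = n -> f xs = g xs) -> Expect n f = Expect n g.
Proof.
  intros H; apply Rle_antisym; apply Expect_le_length; intros xs Hxs; rewrite H; auto; lra.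
Qed.

Lemma Expect_le n f g : (forall xs, f xs <= g xs) -> Expect n f <= Expect n g.
Proof. intros; apply Expect_le_length; auto. Qed.

Lemma Expect_ext n f g : (forall xs, f xs = g xs) -> Expect n f = Expect n g.
Proof. intros; apply Expect_ext_length; auto. Qed.

Lemma Expect_const n c : Expect n (fun _ => c) = c.
Proof.
  induction n as [|n IH]; [apply Expect_nil|].
  rewrite Expect_S; unfold avg4; rewrite IH; field.
Qed.

Lemma Expect_plus n f g : Expect n (fun xs => f xs + g xs) = Expect n f + Expect n g.
Proof.
  revert f g; induction n as [|n IH]; intros f g; [rewrite !Expect_nil; reflexivity|].
  rewrite !Expect_S; unfold avg4; rewrite !IH; field.
Qed.

Lemma Expect_scal n c f : Expect n (fun xs => c * f xs) = c * Expect n f.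
Proof.
  revert f; induction n as [|n IH]; intros f; [rewrite !Expect_nil; reflexivity|].
  rewrite !Expect_S; unfold avg4; rewrite !IH; field.
Qed.

Lemma Expect_minus n f g : Expect n (fun xs => f xs - g xs) = Expect n f - Expect n g.
Proof.
  rewrite (Expect_ext n _ (fun xs => f xs + -1 * g xs)) by (intros; ring).
  rewrite Expect_plus, Expect_scal; ring.
Qed.

Lemma Expect_app t m f :
  Expect (t + m) f = Expect t (fun p => Expect m (fun q => f (p ++ q))).
Proof.
  revert f; induction t as [|t IH]; intros f; [rewrite Expect_nil; reflexivity|].
  simpl (S t + m)%nat; rewrite !Expect_S; apply avg4_ext; intro d; apply IH.
Qed.

Lemma firstn_app_length (p q : list nat) : firstn (length p) (p ++ q) = p.
Proof. rewrite firstn_app, Nat.sub_diag, firstn_O, app_nil_r, firstn_all; reflexivity. Qed.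

Lemma Expect_firstn t m F G :
  (forall xs, length xs = (t + m)%nat -> F xs = G (firstn t xs)) ->
  Expect (t + m) F = Expect t G.
Proof.
  intros H; rewrite Expect_app; apply Expect_ext_length; intros p Hp.
  rewrite <- (Expect_const m (G p)); apply Expect_ext_length; intros q Hq.
  rewrite H by (rewrite length_app; lia).
  rewrite <- Hp, firstn_app_length; reflexivity.
Qed.

(* The step [nth t xs] is uniform and independent of the first [t] steps. *)
Lemma Expect_firstn_nth t m F T :
  (forall xs, length xs = (t + S m)%nat -> F xs = T (firstn t xs) (nth t xs 0%nat)) ->
  Expect (t + S m) F = Expect t (fun p => avg4 (T p)).
Proof.
  intros H; rewrite Expect_app; apply Expect_ext_length; intros p Hp.
  rewrite Expect_S; apply avg4_ext; intro d.
  rewrite <- (Expect_const m (T p d)); apply Expect_ext_length; intros q Hq.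
  rewrite H by (rewrite length_app; simpl; lia).
  rewrite <- Hp, firstn_app_length, app_nth2, Nat.sub_diag by lia; reflexivity.
Qed.

Fixpoint rsum (f : nat -> R) (n : nat) : R :=
  match n with O => 0 | S m => rsum f m + f m end.

Lemma rsum_le f g n : (forall t, (t < n)%nat -> f t <= g t) -> rsum f n <= rsum g n.
Proof.
  induction n as [|n IH]; intros H; simpl; [lra|].
  assert (f n <= g n) by (apply H; lia).
  assert (rsum f n <= rsum g n) by (apply IH; intros; apply H; lia); lra.
Qed.

Lemma rsum_ext f g n : (forall t, (t < n)%nat -> f t = g t) -> rsum f n = rsum g n.
Proof.
  intros H; apply Rle_antisym; apply rsum_le; intros t Ht; rewrite H; auto; lra.
Qed.

Lemma rsum_const c n : rsum (fun _ => c) n = INR n * c.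
Proof. induction n as [|n IH]; simpl rsum; [simpl; ring|]. rewrite IH, S_INR; ring. Qed.

Lemma rsum_plus f g n : rsum (fun t => f t + g t) n = rsum f n + rsum g n.
Proof. induction n as [|n IH]; simpl; [ring|]. rewrite IH; ring. Qed.

Lemma rsum_scal c f n : rsum (fun t => c * f t) n = c * rsum f n.
Proof. induction n as [|n IH]; simpl; [ring|]. rewrite IH; ring. Qed.

Lemma rsum_minus f g n : rsum (fun t => f t - g t) n = rsum f n - rsum g n.
Proof. induction n as [|n IH]; simpl; [ring|]. rewrite IH; ring. Qed.

Lemma rsum_S_shift f n : rsum f (S n) = f 0%nat + rsum (fun t => f (S t)) n.
Proof. induction n as [|n IH]; simpl in *; [ring|]. rewrite IH; ring. Qed.

Lemma rsum_nonneg f n : (forall t, (t < n)%nat -> 0 <= f t) -> 0 <= rsum f n.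
Proof.
  intros H; rewrite <- (Rmult_0_r (INR n)), <- rsum_const; apply rsum_le; auto.
Qed.

Lemma Expect_rsum n F k :
  Expect n (fun xs => rsum (fun t => F t xs) k) = rsum (fun t => Expect n (F t)) k.
Proof.
  induction k as [|k IH]; simpl; [apply Expect_const|].
  rewrite Expect_plus, IH; reflexivity.
Qed.

(** * The transition operator of the walk *)

Lemma walk_cons z d xs k : walk z (d :: xs) (S k) = walk (padd z (step d)) xs k.
Proof. reflexivity. Qed.

Lemma walk_firstn z xs t k : (k <= t)%nat -> walk z (firstn t xs) k = walk z xs k.
Proof. intros H; unfold walk; rewrite firstn_firstn; do 3 f_equal; lia. Qed.

Lemma walk_S z xs t : (t < length xs)%nat ->
  walk z xs (S t) = padd (walk z xs t) (step (nth t xs 0%nat)).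
Proof.
  revert z t; induction xs as [|a xs IH]; intros z t H; simpl in H; [lia|].
  destruct t as [|t]; [reflexivity|].
  rewrite !walk_cons, IH by lia; reflexivity.
Qed.

Lemma phi_firstn z xs t k : (k <= t)%nat -> phi z (firstn t xs) k = phi z xs k.
Proof. intros H; unfold phi; rewrite !walk_firstn by lia; reflexivity. Qed.

Lemma Theta_firstn z xs t k : (k <= t)%nat -> Theta z (firstn t xs) k = Theta z xs k.
Proof.
  induction k as [|k IH]; intros H; simpl; [reflexivity|].
  rewrite IH, phi_firstn by lia; reflexivity.
Qed.

Definition Pt (t : nat) (Psi : pt -> R) (x : pt) : R :=
  Expect t (fun xs => Psi (walk x xs t)).
Definition Qstep (Psi : pt -> R) (y : pt) : R := avg4 (fun d => Psi (padd y (step d))).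

Lemma Pt_0 Psi x : Pt 0 Psi x = Psi x.
Proof. apply Expect_nil. Qed.

Lemma Pt_S_first t Psi x : Pt (S t) Psi x = avg4 (fun d => Pt t Psi (padd x (step d))).
Proof. apply Expect_S. Qed.

Lemma Pt_S t Psi x : Pt (S t) Psi x = Pt t (Qstep Psi) x.
Proof.
  revert x; induction t as [|t IH]; intros x.
  - rewrite Pt_S_first, Pt_0; apply avg4_ext; intro d; apply Pt_0.
  - rewrite Pt_S_first, (Pt_S_first t); apply avg4_ext; intro d; apply IH.
Qed.

Lemma Pt_le t f g x : (forall y, f y <= g y) -> Pt t f x <= Pt t g x.
Proof. intros H; apply Expect_le; intros; apply H. Qed.

Lemma Pt_ext t f g x : (forall y, f y = g y) -> Pt t f x = Pt t g x.
Proof. intros H; apply Expect_ext; intros; apply H. Qed.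

Lemma Pt_plus t f g x : Pt t (fun y => f y + g y) x = Pt t f x + Pt t g x.
Proof. apply Expect_plus. Qed.

Lemma Pt_minus t f g x : Pt t (fun y => f y - g y) x = Pt t f x - Pt t g x.
Proof. apply Expect_minus. Qed.

Lemma Pt_scal t c f x : Pt t (fun y => c * f y) x = c * Pt t f x.
Proof. apply Expect_scal. Qed.

Lemma Pt_const t c x : Pt t (fun _ => c) x = c.
Proof. unfold Pt; apply Expect_const. Qed.

Lemma dynkin n Psi x :
  Pt n Psi x = Psi x + rsum (fun t => Pt t (fun y => Qstep Psi y - Psi y) x) n.
Proof.
  induction n as [|n IH]; simpl rsum; [rewrite Pt_0; ring|].
  rewrite Pt_minus, <- Pt_S; lra.
Qed.

Lemma rsum_Pt_le_incr (k G : pt -> R) (C : R) m y :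
  (forall z, k z <= C * (Qstep G z - G z)) ->
  rsum (fun t => Pt t k y) m <= C * (Pt m G y - G y).
Proof.
  intros H; rewrite (dynkin m G y), Rplus_minus_swap, Rminus_diag, Rplus_0_l, <- rsum_scal.
  apply rsum_le; intros t _; rewrite <- Pt_scal; apply Pt_le; auto.
Qed.

Lemma Expect_walk n t Psi z : (t <= n)%nat ->
  Expect n (fun xs => Psi (walk z xs t)) = Pt t Psi z.
Proof.
  intros H; replace n with (t + (n - t))%nat by lia.
  apply Expect_firstn; intros; rewrite walk_firstn; auto.
Qed.

(** * Radial Lyapunov functions *)

Definition norm2 (y : pt) : R := fst y * fst y + snd y * snd y.
Definition norm4 (y : pt) : R := norm2 y * norm2 y.

Lemma norm2_nonneg y : 0 <= norm2 y.
Proof. unfold norm2; nra. Qed.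

Lemma sqrt2_sq : sqrt 2 * sqrt 2 = 2.
Proof. apply sqrt_sqrt; lra. Qed.

Lemma Qstep_radial (f : R -> R) y :
  let N := norm2 y in let k := 2 * sqrt 2 in
  Qstep (fun z => f (norm2 z)) y =
  (f (N + 2 + k * fst y) + f (N + 2 - k * fst y)
   + f (N + 2 + k * snd y) + f (N + 2 - k * snd y)) / 4.
Proof.
  pose proof sqrt2_sq; unfold Qstep, avg4, norm2, padd, step; simpl.
  f_equal; f_equal; [f_equal; [f_equal|]|]; f_equal; nra.
Qed.

Lemma Qstep_norm2 y : Qstep norm2 y = norm2 y + 2.
Proof. rewrite (Qstep_radial (fun r => r)); simpl; lra. Qed.

Lemma Qstep_norm4 y : Qstep norm4 y = norm4 y + 8 * norm2 y + 4.
Proof.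
  unfold norm4; rewrite (Qstep_radial (fun r => r * r)); simpl.
  pose proof sqrt2_sq; unfold norm2.
  set (a := fst y); set (b := snd y); set (h := sqrt 2) in *; nra.
Qed.

Lemma Pt_norm2 n x : Pt n norm2 x = norm2 x + 2 * INR n.
Proof.
  rewrite dynkin, (rsum_ext _ (fun _ => 2)), rsum_const; [ring|].
  intros t _; rewrite <- (Pt_const t 2 x); apply Pt_ext; intro y; rewrite Qstep_norm2; ring.
Qed.

Lemma Pt_norm4_le n x : Pt n norm4 x <= norm4 x + INR n * (8 * norm2 x + 16 * INR n + 4).
Proof.
  rewrite dynkin; apply Rplus_le_compat_l; rewrite <- rsum_const; apply rsum_le; intros t Ht.
  rewrite (Pt_ext _ _ (fun y => 8 * norm2 y + 4)) by (intro; rewrite Qstep_norm4; ring).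
  rewrite Pt_plus, Pt_scal, Pt_norm2, Pt_const.
  apply lt_INR in Ht; pose proof (pos_INR t); lra.
Qed.

Lemma ln_le x y : 0 < x -> x <= y -> ln x <= ln y.
Proof. intros Hx [Hxy|<-]; [left; apply ln_increasing|]; lra. Qed.

Lemma ln_sub_ge A B : 0 < A -> 0 < B -> 1 - A / B <= ln B - ln A.
Proof.
  intros HA HB; pose proof (exp_ineq1_le (ln (A / B))) as H.
  rewrite exp_ln in H by (apply Rdiv_lt_0_compat; auto).
  unfold Rdiv in H; rewrite ln_mult, ln_Rinv in H by (auto; apply Rinv_0_lt_compat; auto); lra.
Qed.

Lemma ln_le_tangent A B : 0 < A -> 0 < B -> ln B <= ln A + (B - A) / A.
Proof.
  intros HA HB; pose proof (ln_sub_ge B A HB HA).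
  replace ((B - A) / A) with (B / A - 1) by (field; lra); lra.
Qed.

Lemma sq_ratio_le_sq_ln_sub p q : 0 < p -> 0 < q ->
  ((p - q) / (p + q)) * ((p - q) / (p + q)) <= (ln p - ln q) * (ln p - ln q).
Proof.
  assert (Hle : forall p q, 0 < q -> q <= p ->
    ((p - q) / (p + q)) * ((p - q) / (p + q)) <= (ln p - ln q) * (ln p - ln q)).
  { clear p q; intros p q Hq Hqp; pose proof (ln_sub_ge q p Hq ltac:(lra)).
    assert (0 <= (p - q) / (p + q)) by (apply Rmult_le_pos; [lra|left; apply Rinv_0_lt_compat; lra]).
    assert ((p - q) / (p + q) <= 1 - q / p).
    { replace (1 - q / p) with ((p - q) / p) by (field; lra).
      apply Rmult_le_compat_l; [lra|apply Rinv_le_contravar; lra]. }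
    nra. }
  intros Hp Hq; destruct (Rle_dec q p); [auto|].
  replace ((p - q) / (p + q)) with (- ((q - p) / (q + p))) by (field; lra).
  replace (ln p - ln q) with (- (ln q - ln p)) by ring.
  rewrite !Rmult_opp_opp; apply Hle; lra.
Qed.

Definition lnorm (c : R) (y : pt) : R := ln (c + norm2 y).
Definition lnorm_sq (y : pt) : R := lnorm 3 y * lnorm 3 y.

Lemma norm2_shift_step_pos c y u :
  0 < c -> u * u <= norm2 y -> 0 < c + norm2 y + 2 + 2 * sqrt 2 * u.
Proof.
  intros Hc Hu; pose proof sqrt2_sq; pose proof (Rle_0_sqr (sqrt 2 + u)); unfold Rsqr in *; nra.
Qed.

Lemma Qstep_lnorm c y : 0 < c ->
  let w := c + norm2 y + 2 in
  Qstep (lnorm c) y = ln ((w * w - 8 * (fst y * fst y)) * (w * w - 8 * (snd y * snd y))) / 4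
  /\ 0 < w * w - 8 * (fst y * fst y) /\ 0 < w * w - 8 * (snd y * snd y).
Proof.
  intros Hc w; unfold lnorm; rewrite (Qstep_radial (fun r => ln (c + r))); simpl.
  assert (Ha : fst y * fst y <= norm2 y) by (unfold norm2; nra).
  assert (Hb : snd y * snd y <= norm2 y) by (unfold norm2; nra).
  pose proof (norm2_shift_step_pos c y _ Hc Ha) as Ha1.
  pose proof (norm2_shift_step_pos c y (- fst y) Hc ltac:(nra)) as Ha2.
  pose proof (norm2_shift_step_pos c y _ Hc Hb) as Hb1.
  pose proof (norm2_shift_step_pos c y (- snd y) Hc ltac:(nra)) as Hb2.
  pose proof sqrt2_sq.
  assert (Fa : (w + 2 * sqrt 2 * fst y) * (w - 2 * sqrt 2 * fst y) = w * w - 8 * (fst y * fst y))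
    by (replace 8 with (4 * (sqrt 2 * sqrt 2)) by lra; ring).
  assert (Fb : (w + 2 * sqrt 2 * snd y) * (w - 2 * sqrt 2 * snd y) = w * w - 8 * (snd y * snd y))
    by (replace 8 with (4 * (sqrt 2 * sqrt 2)) by lra; ring).
  unfold w in *; rewrite <- Fa, <- Fb; repeat split; try nra.
  rewrite !ln_mult by nra; unfold Rminus; rewrite <- !Rplus_assoc; reflexivity.
Qed.

Lemma ln_eq_ln_pow4_div x : 0 < x -> ln x = ln (x ^ 4) / 4.
Proof. intros; rewrite ln_pow by auto; simpl INR; field. Qed.

Lemma Qstep_lnorm2_incr y :
  1 / ((norm2 y + 4) * (norm2 y + 4)) <= Qstep (lnorm 2) y - lnorm 2 y.
Proof.
  destruct (Qstep_lnorm 2 y) as [HQ [p1 p2]]; [lra|]; rewrite HQ; clear HQ.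
  pose proof (norm2_nonneg y) as HN0.
  assert (HN : norm2 y = fst y * fst y + snd y * snd y) by reflexivity.
  set (a := fst y) in *; set (b := snd y) in *; set (w := 2 + norm2 y + 2) in *.
  unfold lnorm; rewrite (ln_eq_ln_pow4_div (2 + norm2 y)) by lra.
  set (Pi := (w * w - 8 * (a * a)) * (w * w - 8 * (b * b))).
  set (A := (2 + norm2 y) ^ 4).
  assert (HPi : 0 < Pi) by (unfold Pi; nra).
  assert (HA : 0 < A) by (unfold A; apply pow_lt; lra).
  pose proof (ln_sub_ge A Pi HA HPi).
  assert (Hw : 4 <= w) by (unfold w; lra).
  assert (E1 : Pi - A = 8 * (w * w) + 32 * w - 16 + 64 * (a * a) * (b * b))
    by (unfold Pi, A, w; rewrite HN; ring).
  assert (E2 : Pi <= w * w * (w * w) + 64 * (a * a) * (b * b)).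
  { assert (0 <= w * w * (a * a + b * b)) by nra.
    assert (Pi = w * w * (w * w) + 64 * (a * a) * (b * b) - 8 * (w * w * (a * a + b * b)))
      by (unfold Pi; ring); lra. }
  replace (norm2 y + 4) with w by (unfold w; ring).
  assert (1 / (w * w) <= (1 - A / Pi) / 4); [|lra].
  apply Rmult_le_reg_r with (4 * (w * w) * Pi); [nra|].
  replace (1 / (w * w) * (4 * (w * w) * Pi)) with (4 * Pi) by (field; nra).
  replace ((1 - A / Pi) / 4 * (4 * (w * w) * Pi)) with (w * w * (Pi - A)) by (field; nra).
  rewrite E1; assert (0 <= a * a * (b * b)) by nra; nra.
Qed.

Lemma lnorm3_pos y : 0 < lnorm 3 y.
Proof. unfold lnorm; rewrite <- ln_1; apply ln_increasing; pose proof (norm2_nonneg y); lra. Qed.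

Lemma lnorm3_le_Qstep y : lnorm 3 y <= Qstep (lnorm 3) y.
Proof.
  destruct (Qstep_lnorm 3 y) as [HQ [p1 p2]]; [lra|]; rewrite HQ; clear HQ.
  pose proof (norm2_nonneg y) as HN0.
  assert (HN : norm2 y = fst y * fst y + snd y * snd y) by reflexivity.
  set (a := fst y) in *; set (b := snd y) in *; set (w := 3 + norm2 y + 2) in *.
  unfold lnorm; rewrite (ln_eq_ln_pow4_div (3 + norm2 y)) by lra.
  apply Rmult_le_compat_r; [lra|]; apply ln_le; [apply pow_lt; lra|].
  assert (E : (w * w - 8 * (a * a)) * (w * w - 8 * (b * b)) - (3 + norm2 y) ^ 4
              = 16 * (w * w) + 32 * w - 16 + 64 * (a * a) * (b * b)) by (unfold w; rewrite HN; ring).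
  assert (0 <= a * a * (b * b)) by nra; assert (0 <= w) by (unfold w; lra); nra.
Qed.

Lemma avg4_sq_sub_sq_ge L l0 l1 l2 l3 : 0 <= L -> L <= (l0 + l1 + l2 + l3) / 4 ->
  ((l0 - l1) * (l0 - l1) + (l2 - l3) * (l2 - l3)) / 8
  <= (l0 * l0 + l1 * l1 + l2 * l2 + l3 * l3) / 4 - L * L.
Proof.
  intros HL Havg.
  replace ((l0 * l0 + l1 * l1 + l2 * l2 + l3 * l3) / 4 - L * L) with
    (((l0 - L) * (l0 - L) + (l1 - L) * (l1 - L) + (l2 - L) * (l2 - L) + (l3 - L) * (l3 - L)) / 4
     + 2 * L * ((l0 + l1 + l2 + l3) / 4 - L)) by field.
  assert (0 <= 2 * L * ((l0 + l1 + l2 + l3) / 4 - L)) by nra.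
  pose proof (Rle_0_sqr (l0 + l1 - 2 * L)); pose proof (Rle_0_sqr (l2 + l3 - 2 * L)).
  unfold Rsqr in *; lra.
Qed.

Lemma Qstep_lnorm_sq_incr y :
  norm2 y / ((norm2 y + 5) * (norm2 y + 5)) <= Qstep lnorm_sq y - lnorm_sq y.
Proof.
  pose proof (lnorm3_le_Qstep y) as Hsub; pose proof (lnorm3_pos y) as HL.
  pose proof (norm2_nonneg y) as HN0; pose proof sqrt2_sq.
  change (Qstep (lnorm 3) y) with (Qstep (fun z => ln (3 + norm2 z)) y) in Hsub.
  change (Qstep lnorm_sq y) with (Qstep (fun z => ln (3 + norm2 z) * ln (3 + norm2 z)) y).
  rewrite (Qstep_radial (fun r => ln (3 + r))) in Hsub.
  rewrite (Qstep_radial (fun r => ln (3 + r) * ln (3 + r))).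
  unfold lnorm_sq; cbv zeta in *; set (w := norm2 y + 5); set (k := 2 * sqrt 2) in *.
  assert (Hpair : forall u, u * u <= norm2 y ->
    8 * (u * u) / (w * w) <= (ln (3 + (norm2 y + 2 + k * u)) - ln (3 + (norm2 y + 2 - k * u)))
                             * (ln (3 + (norm2 y + 2 + k * u)) - ln (3 + (norm2 y + 2 - k * u)))).
  { intros u Hu.
    pose proof (norm2_shift_step_pos 3 y u ltac:(lra) Hu).
    pose proof (norm2_shift_step_pos 3 y (- u) ltac:(lra) ltac:(nra)).
    pose proof (sq_ratio_le_sq_ln_sub (3 + (norm2 y + 2 + k * u)) (3 + (norm2 y + 2 - k * u))
                  ltac:(unfold k; lra) ltac:(unfold k; nra)) as Hr.
    replace (8 * (u * u) / (w * w)) with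
      ((3 + (norm2 y + 2 + k * u) - (3 + (norm2 y + 2 - k * u)))
       / (3 + (norm2 y + 2 + k * u) + (3 + (norm2 y + 2 - k * u)))
       * ((3 + (norm2 y + 2 + k * u) - (3 + (norm2 y + 2 - k * u)))
          / (3 + (norm2 y + 2 + k * u) + (3 + (norm2 y + 2 - k * u)))));
      [exact Hr|].
    unfold w; replace 8 with (k * k) by (unfold k; lra); field; lra. }
  pose proof (Hpair (fst y) ltac:(unfold norm2; nra)).
  pose proof (Hpair (snd y) ltac:(unfold norm2; nra)).
  pose proof (avg4_sq_sub_sq_ge (lnorm 3 y) _ _ _ _ ltac:(lra) Hsub).
  replace (norm2 y / (w * w))
    with ((8 * (fst y * fst y) / (w * w) + 8 * (snd y * snd y) / (w * w)) / 8)
    by (unfold w; unfold norm2 in *; field; lra).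
  lra.
Qed.

Lemma Pt_lnorm_le c n x : 0 < c -> Pt n (lnorm c) x <= ln (c + norm2 x + 2 * INR n).
Proof.
  intros Hc; pose proof (pos_INR n); pose proof (norm2_nonneg x).
  set (M := c + norm2 x + 2 * INR n).
  assert (HM : 0 < M) by (unfold M; lra).
  apply Rle_trans with (Pt n (fun y => ln M - 1 + / M * (c + norm2 y)) x).
  - apply Pt_le; intro y; unfold lnorm; pose proof (norm2_nonneg y).
    pose proof (ln_le_tangent M (c + norm2 y) HM ltac:(lra)).
    replace ((c + norm2 y - M) / M) with (- 1 + / M * (c + norm2 y)) in * by (field; lra); lra.
  - rewrite Pt_plus, Pt_const, Pt_scal, Pt_plus, Pt_const, Pt_norm2.
    replace (c + (norm2 x + 2 * INR n)) with M by (unfold M; ring).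
    rewrite Rinv_l by lra; lra.
Qed.

Lemma Pt_lnorm2_incr n x : Pt n (lnorm 2) x - lnorm 2 x <= ln (1 + INR n).
Proof.
  pose proof (pos_INR n); pose proof (norm2_nonneg x).
  pose proof (Pt_lnorm_le 2 n x ltac:(lra)).
  assert (ln (2 + norm2 x + 2 * INR n) <= lnorm 2 x + ln (1 + INR n)); [|lra].
  unfold lnorm; rewrite <- ln_mult by lra; apply ln_le; nra.
Qed.

Lemma ln_shift_growth v s : 1 <= v -> 0 <= s ->
  2 * ln v * (ln (v + s) - ln v) <= 4 * (ln (1 + s) * ln (1 + s)) + 4.
Proof.
  intros Hv Hs.
  assert (HL : 0 <= ln v) by (rewrite <- ln_1; apply ln_le; lra).
  assert (HA : 0 <= ln (v + s) - ln v) by (pose proof (ln_le v (v + s)); lra).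
  destruct (Rle_dec v ((1 + s) * (1 + s))) as [Hsmall|Hbig].
  - assert (ln v <= 2 * ln (1 + s))
      by (replace (2 * ln (1 + s)) with (ln ((1 + s) * (1 + s))) by (rewrite ln_mult; lra);
          apply ln_le; lra).
    assert (ln (v + s) - ln v <= ln (1 + s)).
    { assert (ln (v + s) <= ln (v * (1 + s))) by (apply ln_le; nra).
      rewrite ln_mult in * by lra; lra. }
    nra.
  - assert (Hsv : sqrt v * sqrt v = v) by (apply sqrt_sqrt; lra).
    pose proof (sqrt_pos v); set (r := sqrt v) in *; clearbody r.
    assert (Hgt : 1 + s < r).
    { apply Rnot_le_lt; intro Hle; apply Hbig; rewrite <- Hsv; apply Rmult_le_compat; lra. }
    assert (Hln : ln v <= 2 * r).
    { rewrite <- Hsv, ln_mult by lra.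
      pose proof (exp_ineq1_le (ln r)); rewrite exp_ln in * by lra; lra. }
    assert (Htan : ln (v + s) - ln v <= s / v)
      by (pose proof (ln_le_tangent v (v + s)); replace (v + s - v) with s in *; lra).
    assert (2 * ln v * (ln (v + s) - ln v) <= 2 * (2 * r) * (s / v))
      by (apply Rmult_le_compat; lra).
    replace (2 * (2 * r) * (s / v)) with (4 * s / r) in * by (rewrite <- Hsv; field; lra).
    assert (4 * s / r <= 4); [|nra].
    apply Rmult_le_reg_r with r; [lra|].
    unfold Rdiv; rewrite Rmult_assoc, Rinv_l by lra; lra.
Qed.

Lemma Pt_lnorm_sq_le n x :
  let A := ln (3 + norm2 x + 2 * INR n) in Pt n lnorm_sq x <= A * A + 6.
Proof.
  intros A; pose proof (pos_INR n); pose proof (norm2_nonneg x).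
  set (m := norm2 x + 2 * INR n); set (c := 3 + m).
  assert (Hc : 3 <= c) by (unfold c, m; lra).
  assert (HA : 0 < A) by (unfold A; rewrite <- ln_1; apply ln_increasing; lra).
  apply Rle_trans with
    (Pt n (fun y => (A - m / c) * (A - m / c) + 2 * (A - m / c) / c * norm2 y
                    + 1 / (c * c) * norm4 y) x).
  - apply Pt_le; intro y; unfold lnorm_sq; pose proof (lnorm3_pos y); pose proof (norm2_nonneg y).
    assert (lnorm 3 y <= A + (norm2 y - m) / c).
    { pose proof (ln_le_tangent c (3 + norm2 y)) as Ht; unfold lnorm.
      replace A with (ln c) by (unfold A, c, m; f_equal; ring).
      replace (3 + norm2 y - c) with (norm2 y - m) in Ht by (unfold c; ring); apply Ht; lra. }
    replace ((A - m / c) * (A - m / c) + 2 * (A - m / c) / c * norm2 y + 1 / (c * c) * norm4 y)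
      with ((A + (norm2 y - m) / c) * (A + (norm2 y - m) / c)) by (unfold norm4; field; lra).
    nra.
  - rewrite !Pt_plus, Pt_const, !Pt_scal, Pt_norm2; pose proof (Pt_norm4_le n x).
    replace ((A - m / c) * (A - m / c) + 2 * (A - m / c) / c * (norm2 x + 2 * INR n)
             + 1 / (c * c) * Pt n norm4 x)
      with (A * A + (Pt n norm4 x - m * m) / (c * c)) by (unfold m; field; lra).
    assert ((Pt n norm4 x - m * m) / (c * c) <= 6); [|lra].
    apply Rmult_le_reg_r with (c * c); [nra|].
    unfold Rdiv; rewrite Rmult_assoc, Rinv_l by nra.
    unfold norm4 in *; unfold c, m; nra.
Qed.

Lemma Pt_lnorm_sq_incr n x :
  let l := ln (1 + 2 * INR n) in Pt n lnorm_sq x - lnorm_sq x <= 5 * (l * l) + 10.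
Proof.
  intros l; pose proof (pos_INR n); pose proof (norm2_nonneg x).
  pose proof (Pt_lnorm_sq_le n x) as HP; cbv zeta in HP.
  set (v := 3 + norm2 x) in *.
  replace (3 + norm2 x + 2 * INR n) with (v + 2 * INR n) in HP by (unfold v; ring).
  pose proof (ln_shift_growth v (2 * INR n) ltac:(unfold v; lra) ltac:(lra)) as Hg; fold l in Hg.
  assert (HL : 0 <= ln v) by (rewrite <- ln_1; apply ln_le; unfold v; lra).
  assert (HAL : 0 <= ln (v + 2 * INR n) - ln v) by (pose proof (ln_le v (v + 2 * INR n)); unfold v in *; lra).
  assert (ln (v + 2 * INR n) - ln v <= l).
  { assert (ln (v + 2 * INR n) <= ln (v * (1 + 2 * INR n))) by (apply ln_le; unfold v in *; nra).
    rewrite ln_mult in * by (unfold v; lra); unfold l; lra. }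
  change (lnorm_sq x) with (ln v * ln v).
  set (L := ln v) in *; set (A := ln (v + 2 * INR n)) in *.
  assert ((A - L) * (A - L) <= l * l) by nra.
  replace (A * A) with ((A - L) * (A - L) + 2 * L * (A - L) + L * L) in HP by ring; lra.
Qed.

(** * Turning angles *)

Definition dot (u v : pt) : R := fst u * fst v + snd u * snd v.

Definition angle (u v : pt) : R :=
  match Req_EM_T (cross u v) 0 with
  | left _ => 0
  | right _ => epsilon (inhabits 0)
                 (fun t => -PI < t < PI /\ rot t (cunit u) = cunit v)
  end.

Lemma phi_angle z xs t : phi z xs (S t) = angle (walk z xs t) (walk z xs (S t)).
Proof. unfold phi, angle; rewrite Nat.sub_succ, Nat.sub_0_r; reflexivity. Qed.

Lemma angle_zero u v : cross u v = 0 -> angle u v = 0.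
Proof. intros H; unfold angle; destruct (Req_EM_T _ 0); [reflexivity|contradiction]. Qed.

Lemma lagrange_identity u v : dot u v * dot u v + cross u v * cross u v = norm2 u * norm2 v.
Proof. unfold dot, cross, norm2; ring. Qed.

Lemma cnorm_sq u : cnorm u * cnorm u = norm2 u.
Proof.
  pose proof (norm2_nonneg u); unfold cnorm, norm2 in *; rewrite sqrt_sqrt; simpl; nra.
Qed.

Lemma cnorm_pos u : 0 < norm2 u -> 0 < cnorm u.
Proof. unfold cnorm, norm2; intros; apply sqrt_lt_R0; simpl; nra. Qed.

Lemma norm2_pos_of_cross u v : cross u v <> 0 -> 0 < norm2 u /\ 0 < norm2 v.
Proof.
  intros H; pose proof (lagrange_identity u v); pose proof (norm2_nonneg u);
    pose proof (norm2_nonneg v).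
  assert (0 < cross u v * cross u v) by (apply Rsqr_pos_lt; assumption).
  assert (0 <= dot u v * dot u v) by nra.
  split; apply Rnot_le_lt; intro; nra.
Qed.

Lemma rot_unit_iff t p q : norm2 p = 1 ->
  (rot t p = q <-> cos t = dot p q /\ sin t = cross p q).
Proof.
  unfold norm2, dot, cross, rot; destruct p as [p1 p2], q as [q1 q2]; simpl; intros Hp; split.
  - intros E; injection E as <- <-; split.
    + transitivity (cos t * (p1 * p1 + p2 * p2)); [rewrite Hp|]; ring.
    + transitivity (sin t * (p1 * p1 + p2 * p2)); [rewrite Hp|]; ring.
  - intros [-> ->]; f_equal.
    + transitivity (q1 * (p1 * p1 + p2 * p2)); [|rewrite Hp]; ring.
    + transitivity (q2 * (p1 * p1 + p2 * p2)); [|rewrite Hp]; ring.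
Qed.

Lemma cos_sin_exists c s : c * c + s * s = 1 -> s <> 0 ->
  exists t, -PI < t < PI /\ cos t = c /\ sin t = s.
Proof.
  intros Hcs Hs.
  assert (Hc1 : -1 <= c <= 1) by nra.
  pose proof (acos_bound c) as Hb; pose proof (cos_acos c Hc1) as Hcos.
  pose proof (sin_acos c Hc1) as Hsin.
  replace (1 - c²) with (s²) in Hsin by (unfold Rsqr; lra); rewrite sqrt_Rsqr_abs in Hsin.
  assert (Habs : 0 < Rabs s) by (apply Rabs_pos_lt; assumption).
  assert (0 < acos c < PI).
  { split; [destruct Hb as [[|E] _]|destruct Hb as [_ [|E]]]; auto; exfalso.
    - rewrite <- E, sin_0 in Hsin; lra.
    - rewrite E, sin_PI in Hsin; lra. }
  destruct (Rcase_abs s) as [Hneg|Hpos].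
  - exists (- acos c); rewrite cos_neg, sin_neg, Hsin, Rabs_left by assumption.
    repeat split; lra.
  - exists (acos c); rewrite Hsin, Rabs_right by assumption; repeat split; lra.
Qed.

Lemma angle_spec u v : cross u v <> 0 ->
  -PI < angle u v < PI /\ cos (angle u v) * (cnorm u * cnorm v) = dot u v /\
  sin (angle u v) * (cnorm u * cnorm v) = cross u v.
Proof.
  intros Hc; destruct (norm2_pos_of_cross u v Hc) as [Hu Hv].
  pose proof (cnorm_pos u Hu); pose proof (cnorm_pos v Hv).
  pose proof (cnorm_sq u); pose proof (cnorm_sq v).
  assert (Hnn : 0 < cnorm u * cnorm v) by nra.
  set (p := cunit u); set (q := cunit v).
  assert (Hunit : forall w, 0 < cnorm w -> cnorm w * cnorm w = norm2 w -> norm2 (cunit w) = 1).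
  { intros w Hw Hsq; transitivity (norm2 w / (cnorm w * cnorm w)).
    - unfold norm2, cunit; simpl; field; lra.
    - rewrite <- Hsq; field; lra. }
  assert (Hp : norm2 p = 1) by (apply Hunit; auto).
  assert (Hq : norm2 q = 1) by (apply Hunit; auto).
  assert (Hdot : dot p q * (cnorm u * cnorm v) = dot u v)
    by (unfold p, q, dot, cunit; simpl; field; lra).
  assert (Hcross : cross p q * (cnorm u * cnorm v) = cross u v)
    by (unfold p, q, cross, cunit; simpl; field; lra).
  assert (Hex : exists t, -PI < t < PI /\ rot t p = q).
  { destruct (cos_sin_exists (dot p q) (cross p q)) as [t [Ht [Hct Hst]]].
    - rewrite lagrange_identity, Hp, Hq; ring.
    - intro E; rewrite E in Hcross; lra.
    - exists t; split; [assumption|]; apply rot_unit_iff; auto. }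
  unfold angle; destruct (Req_EM_T _ 0) as [E|_]; [contradiction|].
  destruct (epsilon_spec (inhabits 0) _ Hex) as [Hr Hrot]; fold p q in Hrot |- *.
  apply rot_unit_iff in Hrot; [|assumption]; destruct Hrot as [-> ->]; auto.
Qed.

Lemma angle_sq_le u v : angle u v * angle u v <= 16.
Proof.
  destruct (Req_dec (cross u v) 0) as [E|E].
  - rewrite angle_zero by assumption; lra.
  - destruct (angle_spec u v E) as [H _]; pose proof PI_4; pose proof PI_RGT_0; nra.
Qed.

Lemma angle_acute u v : 0 < norm2 u -> 0 < dot u v ->
  - (PI / 2) < angle u v < PI / 2 /\ cos (angle u v) * (cnorm u * cnorm v) = dot u v /\
  sin (angle u v) * (cnorm u * cnorm v) = cross u v.
Proof.
  intros Hu Hd.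
  assert (Hv : 0 < norm2 v).
  { pose proof (lagrange_identity u v); pose proof (Rsqr_pos_lt (dot u v)); unfold Rsqr in *.
    pose proof (Rle_0_sqr (cross u v)); unfold Rsqr in *; nra. }
  pose proof (cnorm_pos u Hu); pose proof (cnorm_pos v Hv).
  pose proof (cnorm_sq u); pose proof (cnorm_sq v); pose proof PI_RGT_0.
  assert (Hnn : 0 < cnorm u * cnorm v) by nra.
  destruct (Req_dec (cross u v) 0) as [E|E].
  - rewrite angle_zero, cos_0, sin_0 by assumption.
    pose proof (lagrange_identity u v) as Hl; rewrite E in Hl.
    assert (cnorm u * cnorm v = dot u v) by nra.
    repeat split; lra.
  - destruct (angle_spec u v E) as [Hr [Hc Hs]]; repeat split; auto.
    + apply Rnot_le_lt; intro; assert (cos (angle u v) <= 0); [|nra].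
      rewrite cos_sym; apply cos_le_0; lra.
    + apply Rnot_le_lt; intro; assert (cos (angle u v) <= 0); [|nra].
      apply cos_le_0; lra.
Qed.

Lemma sin_ge_cubic t : 0 <= t <= 1 -> t - t ^ 3 / 6 <= sin t.
Proof.
  intros H; pose proof PI2_1; destruct (SIN t) as [H1 _]; try lra.
  eapply Rle_trans; [|apply H1]; unfold sin_lb, sin_approx, sin_term; simpl.
  assert (0 <= t * t) by nra; assert (t * t <= 1) by nra.
  assert (0 <= t * (t * (t * (t * (t * 1))))) by (apply Rmult_le_pos; nra).
  nra.
Qed.

Lemma sq_le_sin_sq t : t * t <= 1 -> t * t <= 36 / 25 * (sin t * sin t).
Proof.
  assert (Hpos : forall u, 0 <= u -> u * u <= 1 -> 5 / 6 * u <= sin u).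
  { intros u Hu Hu1; assert (Hu2 : u <= 1) by nra.
    pose proof (sin_ge_cubic u (conj Hu Hu2)); simpl in *; nra. }
  intros H; destruct (Rle_dec 0 t).
  - pose proof (Hpos t r H); nra.
  - pose proof (Hpos (- t) ltac:(lra) ltac:(nra)); rewrite sin_neg in *; nra.
Qed.

Lemma sq_le_of_sin_sq_le t : - (PI / 2) < t < PI / 2 -> sin t * sin t <= 1 / 25 -> t * t <= 1 / 16.
Proof.
  intros H Hs; pose proof PI2_1.
  assert (Hq : 1 / 5 < sin (1 / 4)) by (pose proof (sin_ge_cubic (1 / 4)); lra).
  destruct (Rle_dec t (1 / 4)); destruct (Rle_dec (- (1 / 4)) t); try nra.
  - assert (sin t < sin (- (1 / 4))) by (apply sin_increasing_1; lra).
    rewrite sin_neg in *; nra.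
  - assert (sin (1 / 4) < sin t) by (apply sin_increasing_1; lra); nra.
Qed.

Lemma norm2_step d : norm2 (step d) = 2.
Proof. pose proof sqrt2_sq; destruct d as [|[|[|d]]]; unfold norm2, step; simpl; lra. Qed.

Lemma step_angle_far y d : 100 <= norm2 y ->
  let v := padd y (step d) in let t := angle y v in
  norm2 y / 2 <= norm2 v /\ t * t <= 1 / 16 /\ t * t <= 6 / norm2 y /\
  cos t * (cnorm y * cnorm v) = dot y v /\ sin t * (cnorm y * cnorm v) = cross y v.
Proof.
  intros HN v t; pose proof (norm2_step d) as He.
  assert (Hv : norm2 v = norm2 y + 2 * dot y (step d) + 2)
    by (unfold v, padd, dot; unfold norm2 in He |- *; simpl; lra).
  assert (Hd : dot y v = norm2 y + dot y (step d)) by (unfold v, dot, norm2, padd; simpl; ring).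
  assert (Hc : cross y v = cross y (step d)) by (unfold v, cross, padd; simpl; ring).
  pose proof (lagrange_identity y (step d)) as Hl; rewrite He in Hl.
  set (de := dot y (step d)) in *; set (ce := cross y (step d)) in *.
  assert (de * de <= 2 * norm2 y) by nra.
  assert (HNv : norm2 y / 2 <= norm2 v) by nra.
  destruct (angle_acute y v) as [Hr [Hcos Hsin]]; [lra|nra|]; fold t in Hr, Hcos, Hsin.
  pose proof (cnorm_sq y); pose proof (cnorm_sq v).
  assert (Hs2 : sin t * sin t * (norm2 y * norm2 v) = ce * ce)
    by (rewrite <- Hc, <- Hsin, <- H0, <- H1; ring).
  assert (Hs3 : sin t * sin t <= 4 / norm2 y).
  { apply Rmult_le_reg_r with (norm2 y * norm2 v); [nra|]; rewrite Hs2.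
    replace (4 / norm2 y * (norm2 y * norm2 v)) with (4 * norm2 v) by (field; lra); nra. }
  assert (4 / norm2 y <= 1 / 25).
  { apply Rmult_le_reg_r with (norm2 y); [lra|].
    unfold Rdiv; rewrite Rmult_assoc, Rinv_l by lra; lra. }
  assert (Ht : t * t <= 1 / 16) by (apply sq_le_of_sin_sq_le; lra).
  repeat split; auto.
  pose proof (sq_le_sin_sq t ltac:(lra)).
  assert (0 < / norm2 y) by (apply Rinv_0_lt_compat; lra).
  unfold Rdiv in *; nra.
Qed.

(** * Mean turning angle *)

Definition mean_angle (y : pt) : R := avg4 (fun d => angle y (padd y (step d))).
Definition mean_angle_sq (y : pt) : R :=
  avg4 (fun d => angle y (padd y (step d)) * angle y (padd y (step d))).

Definition cmul (u v : pt) : pt :=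
  (fst u * fst v - snd u * snd v, fst u * snd v + snd u * fst v).

Lemma cmul_polar s t r q :
  cmul (cos s * r, sin s * r) (cos t * q, sin t * q) = (cos (s + t) * (r * q), sin (s + t) * (r * q)).
Proof. unfold cmul; simpl; rewrite cos_plus, sin_plus; f_equal; ring. Qed.

(* As complex numbers, [(dot y v, cross y v) = conj y * v]; the product over the four
   steps is [conj y ^ 4 * (y ^ 4 - 4)], whose imaginary part is [4 Im (y ^ 4)]. *)
Lemma step_product_im y :
  let w d := (dot y (padd y (step d)), cross y (padd y (step d))) in
  snd (cmul (cmul (cmul (w 0%nat) (w 1%nat)) (w 2%nat)) (w 3%nat))
  = 4 * (4 * fst y ^ 3 * snd y - 4 * fst y * snd y ^ 3).
Proof.
  unfold cmul, dot, cross, padd, step; simpl.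
  set (a := fst y); set (b := snd y); set (h := sqrt 2).
  transitivity ((h * h) * (h * h) * (4 * a ^ 3 * b - 4 * a * b ^ 3)); [ring|].
  unfold h; rewrite sqrt2_sq; ring.
Qed.

Lemma im_quartic_sq_le a b :
  (4 * a ^ 3 * b - 4 * a * b ^ 3) * (4 * a ^ 3 * b - 4 * a * b ^ 3)
  <= (a * a + b * b) * (a * a + b * b) * ((a * a + b * b) * (a * a + b * b)).
Proof. pose proof (Rle_0_sqr (a ^ 4 - 6 * a ^ 2 * b ^ 2 + b ^ 4)); unfold Rsqr in *; nra. Qed.

Lemma sq_le_div_of_mul_eq s r c m : 0 < m -> m <= r * r -> s * r = c -> s * s <= c * c / m.
Proof.
  intros Hm Hr Hc; subst c; apply Rmult_le_reg_r with m; [lra|].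
  replace (s * r * (s * r) / m * m) with ((s * s) * (r * r)) by (field; lra).
  assert (0 <= s * s) by nra; nra.
Qed.

(* The sum of the four turning angles is the argument of the product in [step_product_im]. *)
Lemma turn_sum_far y : 100 <= norm2 y ->
  let T := 4 * mean_angle y in
  T * T <= 1 /\ sin T * sin T <= 256 / (norm2 y * norm2 y * (norm2 y * norm2 y)).
Proof.
  intros HN.
  destruct (step_angle_far y 0 HN) as [Hv0 [Ht0 [_ [Hc0 Hs0]]]].
  destruct (step_angle_far y 1 HN) as [Hv1 [Ht1 [_ [Hc1 Hs1]]]].
  destruct (step_angle_far y 2 HN) as [Hv2 [Ht2 [_ [Hc2 Hs2]]]].
  destruct (step_angle_far y 3 HN) as [Hv3 [Ht3 [_ [Hc3 Hs3]]]].
  pose proof (step_product_im y) as Him; cbv beta zeta in Him.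
  rewrite <- Hc0, <- Hs0, <- Hc1, <- Hs1, <- Hc2, <- Hs2, <- Hc3, <- Hs3, !cmul_polar in Him.
  cbn [snd] in Him; replace (4 * mean_angle y) with (angle y (padd y (step 0))
    + angle y (padd y (step 1)) + angle y (padd y (step 2)) + angle y (padd y (step 3)))
    by (unfold mean_angle, avg4; field).
  set (v0 := padd y (step 0)) in *; set (v1 := padd y (step 1)) in *.
  set (v2 := padd y (step 2)) in *; set (v3 := padd y (step 3)) in *.
  set (T := angle y v0 + angle y v1 + angle y v2 + angle y v3) in *.
  split.
  { assert (-1 <= T <= 1); [|nra].
    assert (-1/4 <= angle y v0 <= 1/4) by nra; assert (-1/4 <= angle y v1 <= 1/4) by nra;
      assert (-1/4 <= angle y v2 <= 1/4) by nra; assert (-1/4 <= angle y v3 <= 1/4) by nra.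
    unfold T; lra. }
  pose proof (cnorm_sq y); pose proof (cnorm_sq v0); pose proof (cnorm_sq v1);
    pose proof (cnorm_sq v2); pose proof (cnorm_sq v3).
  set (ab := 4 * fst y ^ 3 * snd y - 4 * fst y * snd y ^ 3) in *.
  set (r := cnorm y * cnorm v0 * (cnorm y * cnorm v1) * (cnorm y * cnorm v2) * (cnorm y * cnorm v3)) in *.
  set (N := norm2 y) in *; set (N4 := N * N * (N * N)).
  assert (HN4 : 100 * 100 * (100 * 100) <= N4) by (unfold N4; assert (100 * 100 <= N * N) by nra; nra).
  assert (Hr : N4 * (N4 / 16) <= r * r).
  { replace (r * r) with (N4 * (norm2 v0 * norm2 v1 * (norm2 v2 * norm2 v3)))
      by (unfold r, N4; rewrite <- H, <- H0, <- H1, <- H2, <- H3; ring).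
    apply Rmult_le_compat_l; [lra|].
    apply Rle_trans with (N / 2 * (N / 2) * (N / 2 * (N / 2))); [unfold N4; lra|].
    apply Rmult_le_compat; try (apply Rmult_le_pos; lra); apply Rmult_le_compat; lra. }
  pose proof (sq_le_div_of_mul_eq (sin T) r (4 * ab) (N4 * (N4 / 16)) ltac:(nra) Hr Him) as Hs.
  assert (Hab : ab * ab <= N4) by (apply im_quartic_sq_le).
  apply Rle_trans with (4 * ab * (4 * ab) / (N4 * (N4 / 16))); [exact Hs|].
  fold N4; apply Rmult_le_reg_r with (N4 * N4); [nra|].
  replace (4 * ab * (4 * ab) / (N4 * (N4 / 16)) * (N4 * N4)) with (256 * (ab * ab)) by (field; lra).
  replace (256 / N4 * (N4 * N4)) with (256 * N4) by (field; lra); lra.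
Qed.

Lemma mean_angle_sq_far y : 100 <= norm2 y ->
  mean_angle y * mean_angle y <= 24 / (norm2 y * norm2 y * (norm2 y * norm2 y)).
Proof.
  intros HN; destruct (turn_sum_far y HN) as [HT Hs].
  pose proof (sq_le_sin_sq _ HT) as HsinT.
  set (N4 := norm2 y * norm2 y * (norm2 y * norm2 y)) in *.
  assert (0 < N4) by (unfold N4; apply Rmult_lt_0_compat; nra).
  assert (0 < / N4) by (apply Rinv_0_lt_compat; lra).
  unfold Rdiv in *; nra.
Qed.

Lemma abs_le_of_sq_le D K : 0 <= K -> D * D <= K * K -> Rabs D <= K.
Proof.
  intros; destruct (Rcase_abs D); [rewrite Rabs_left by auto|rewrite Rabs_right by auto]; nra.
Qed.

Lemma inv_sq_ge_near y : norm2 y < 100 -> 1 / 10816 <= 1 / ((norm2 y + 4) * (norm2 y + 4)).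
Proof.
  intros; pose proof (norm2_nonneg y).
  apply Rmult_le_reg_r with (10816 * ((norm2 y + 4) * (norm2 y + 4))); [nra|].
  replace (1 / 10816 * (10816 * ((norm2 y + 4) * (norm2 y + 4))))
    with ((norm2 y + 4) * (norm2 y + 4)) by field.
  replace (1 / ((norm2 y + 4) * (norm2 y + 4)) * (10816 * ((norm2 y + 4) * (norm2 y + 4))))
    with 10816 by (field; nra).
  nra.
Qed.

Lemma mean_angle_abs_le y : Rabs (mean_angle y) <= 50000 * (Qstep (lnorm 2) y - lnorm 2 y).
Proof.
  pose proof (Qstep_lnorm2_incr y) as Hg; pose proof (norm2_nonneg y) as HN.
  destruct (Rle_dec 100 (norm2 y)) as [Hfar|Hnear].
  - pose proof (mean_angle_sq_far y Hfar) as Hd; set (N := norm2 y) in *.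
    assert (HNN : 0 < N * N * (N * N)) by (apply Rmult_lt_0_compat; nra).
    assert (Rabs (mean_angle y) <= 5 / (N * N)).
    { apply abs_le_of_sq_le; [apply Rmult_le_pos; [lra|left; apply Rinv_0_lt_compat; nra]|].
      replace (5 / (N * N) * (5 / (N * N))) with (25 / (N * N * (N * N))) by (field; lra).
      assert (24 / (N * N * (N * N)) <= 25 / (N * N * (N * N)))
        by (unfold Rdiv; apply Rmult_le_compat_r; [left; apply Rinv_0_lt_compat|]; lra).
      lra. }
    assert (5 / (N * N) <= 50000 * (1 / ((N + 4) * (N + 4)))); [|lra].
    apply Rmult_le_reg_r with (N * N * ((N + 4) * (N + 4))); [nra|].
    replace (5 / (N * N) * (N * N * ((N + 4) * (N + 4)))) with (5 * ((N + 4) * (N + 4)))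
      by (field; lra).
    replace (50000 * (1 / ((N + 4) * (N + 4))) * (N * N * ((N + 4) * (N + 4))))
      with (50000 * (N * N)) by (field; nra).
    nra.
  - assert (Rabs (mean_angle y) <= 4).
    { apply abs_le_of_sq_le; [lra|]; unfold mean_angle, avg4.
      pose proof (angle_sq_le y (padd y (step 0))); pose proof (angle_sq_le y (padd y (step 1)));
        pose proof (angle_sq_le y (padd y (step 2))); pose proof (angle_sq_le y (padd y (step 3))).
      set (a0 := angle y (padd y (step 0))) in *; set (a1 := angle y (padd y (step 1))) in *.
      set (a2 := angle y (padd y (step 2))) in *; set (a3 := angle y (padd y (step 3))) in *.
      assert (-4 <= a0 <= 4) by nra; assert (-4 <= a1 <= 4) by nra;
        assert (-4 <= a2 <= 4) by nra; assert (-4 <= a3 <= 4) by nra.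
      assert (-4 <= (a0 + a1 + a2 + a3) / 4 <= 4) by lra; nra. }
    pose proof (inv_sq_ge_near y ltac:(lra)); lra.
Qed.

Lemma mean_angle_sq_le y :
  mean_angle_sq y <= 24 * (Qstep lnorm_sq y - lnorm_sq y) + 200000 * (Qstep (lnorm 2) y - lnorm 2 y).
Proof.
  pose proof (Qstep_lnorm2_incr y) as Hg; pose proof (norm2_nonneg y) as HN.
  pose proof (Qstep_lnorm_sq_incr y) as HL.
  assert (0 <= 1 / ((norm2 y + 4) * (norm2 y + 4)))
    by (apply Rmult_le_pos; [lra|left; apply Rinv_0_lt_compat; nra]).
  assert (0 <= norm2 y / ((norm2 y + 5) * (norm2 y + 5)))
    by (apply Rmult_le_pos; [lra|left; apply Rinv_0_lt_compat; nra]).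
  unfold mean_angle_sq, avg4.
  destruct (Rle_dec 100 (norm2 y)) as [Hfar|Hnear].
  - destruct (step_angle_far y 0 Hfar) as [_ [_ [G0 _]]].
    destruct (step_angle_far y 1 Hfar) as [_ [_ [G1 _]]].
    destruct (step_angle_far y 2 Hfar) as [_ [_ [G2 _]]].
    destruct (step_angle_far y 3 Hfar) as [_ [_ [G3 _]]].
    set (N := norm2 y) in *.
    assert (6 / N <= 24 * (N / ((N + 5) * (N + 5)))); [|lra].
    apply Rmult_le_reg_r with (N * ((N + 5) * (N + 5))); [nra|].
    replace (6 / N * (N * ((N + 5) * (N + 5)))) with (6 * ((N + 5) * (N + 5))) by (field; lra).
    replace (24 * (N / ((N + 5) * (N + 5))) * (N * ((N + 5) * (N + 5)))) with (24 * (N * N))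
      by (field; nra).
    nra.
  - pose proof (inv_sq_ge_near y ltac:(lra)).
    pose proof (angle_sq_le y (padd y (step 0))); pose proof (angle_sq_le y (padd y (step 1)));
      pose proof (angle_sq_le y (padd y (step 2))); pose proof (angle_sq_le y (padd y (step 3))).
    lra.
Qed.

Lemma rsum_Pt_mean_angle_abs m y :
  rsum (fun t => Pt t (fun z => Rabs (mean_angle z)) y) m <= 50000 * ln (1 + INR m).
Proof.
  eapply Rle_trans; [apply rsum_Pt_le_incr with (G := lnorm 2); intro; apply mean_angle_abs_le|].
  pose proof (Pt_lnorm2_incr m y); lra.
Qed.

Lemma rsum_Pt_mean_angle_sq m y :
  let l := ln (1 + 2 * INR m) in
  rsum (fun t => Pt t mean_angle_sq y) m <= 24 * (5 * (l * l) + 10) + 200000 * ln (1 + INR m).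
Proof.
  intros l.
  assert (H : rsum (fun t => Pt t mean_angle_sq y) m <=
    rsum (fun t => Pt t (fun z => 24 * (Qstep lnorm_sq z - lnorm_sq z)) y
                   + Pt t (fun z => 200000 * (Qstep (lnorm 2) z - lnorm 2 z)) y) m).
  { apply rsum_le; intros; rewrite <- Pt_plus; apply Pt_le; apply mean_angle_sq_le. }
  rewrite rsum_plus in H.
  pose proof (rsum_Pt_le_incr (fun z => 24 * (Qstep lnorm_sq z - lnorm_sq z)) lnorm_sq 24 m y
                ltac:(intros; lra)).
  pose proof (rsum_Pt_le_incr (fun z => 200000 * (Qstep (lnorm 2) z - lnorm 2 z)) (lnorm 2)
                200000 m y ltac:(intros; lra)).
  pose proof (Pt_lnorm_sq_incr m y) as HL; cbv zeta in HL; fold l in HL.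
  pose proof (Pt_lnorm2_incr m y).
  lra.
Qed.

(** * Additive functionals *)

Definition addfun (k : pt -> R) (m : nat) (x : pt) (xs : list nat) : R :=
  rsum (fun t => k (walk x xs t)) m.
Definition addfun_mean (k : pt -> R) (m : nat) (x : pt) : R := Expect m (addfun k m x).
Definition addfun_msq (k : pt -> R) (m : nat) (x : pt) : R :=
  Expect m (fun xs => addfun k m x xs * addfun k m x xs).

Lemma addfun_cons k m x d s : addfun k (S m) x (d :: s) = k x + addfun k m (padd x (step d)) s.
Proof. unfold addfun; rewrite rsum_S_shift; reflexivity. Qed.

Lemma addfun_mean_eq k m x : addfun_mean k m x = rsum (fun t => Pt t k x) m.
Proof.
  unfold addfun_mean, addfun; rewrite Expect_rsum.
  apply rsum_ext; intros; apply Expect_walk; lia.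
Qed.

Lemma addfun_mean_S k m x :
  addfun_mean k (S m) x = k x + avg4 (fun d => addfun_mean k m (padd x (step d))).
Proof.
  unfold addfun_mean; rewrite Expect_S.
  rewrite (avg4_ext _ (fun d => k x + Expect m (addfun k m (padd x (step d))))).
  - unfold avg4; lra.
  - intro d; rewrite <- (Expect_const m (k x)) at 1; rewrite <- Expect_plus.
    apply Expect_ext; intros; apply addfun_cons.
Qed.

Lemma addfun_msq_S k m x :
  addfun_msq k (S m) x =
  avg4 (fun d => k x * k x + 2 * k x * addfun_mean k m (padd x (step d))
                 + addfun_msq k m (padd x (step d))).
Proof.
  unfold addfun_msq, addfun_mean; rewrite Expect_S; apply avg4_ext; intro d.
  set (z := padd x (step d)).
  rewrite (Expect_ext m _ (fun xs => k x * k x + (2 * k x * addfun k m z xs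
                                                  + addfun k m z xs * addfun k m z xs)))
    by (intros; rewrite addfun_cons; fold z; ring).
  rewrite !Expect_plus, Expect_const, Expect_scal; ring.
Qed.

Lemma addfun_mean_nonneg k m x : (forall z, 0 <= k z) -> 0 <= addfun_mean k m x.
Proof.
  intros H; rewrite addfun_mean_eq; apply rsum_nonneg; intros.
  rewrite <- (Pt_const t 0 x); apply Pt_le; auto.
Qed.

(* The discrete Khasminskii lemma. *)
Lemma addfun_msq_le k M K : (forall z, 0 <= k z) ->
  (forall j y, (j <= M)%nat -> addfun_mean k j y <= K) ->
  forall j x, (j <= M)%nat -> addfun_msq k j x <= 2 * K * addfun_mean k j x.
Proof.
  intros Hk HK j; induction j as [|j IH]; intros x Hj.
  - unfold addfun_msq, addfun_mean, addfun; rewrite !Expect_nil; simpl; lra.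
  - rewrite addfun_msq_S; pose proof (HK (S j) x Hj) as Hb; rewrite addfun_mean_S in Hb |- *.
    eapply Rle_trans; [apply avg4_le; intro d; apply Rplus_le_compat_l, IH; lia|].
    set (B := avg4 (fun d => addfun_mean k j (padd x (step d)))) in *.
    assert (HB : 0 <= B).
    { replace 0 with (avg4 (fun _ => 0)) by (unfold avg4; field).
      apply avg4_le; intro; apply addfun_mean_nonneg; auto. }
    replace (avg4 (fun d => k x * k x + 2 * k x * addfun_mean k j (padd x (step d))
                            + 2 * K * addfun_mean k j (padd x (step d))))
      with (k x * k x + 2 * k x * B + 2 * K * B) by (unfold B, avg4; field).
    pose proof (Hk x); nra.
Qed.

(** * The maximal inequality *)

Fixpoint runmax (x : nat -> R) (t : nat) : R :=
  match t with O => x O | S m => Rmax (runmax x m) (x (S m)) end.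

Lemma runmax_ext x y n : (forall t, (t <= n)%nat -> x t = y t) -> runmax x n = runmax y n.
Proof. induction n as [|n IH]; intros H; simpl; [apply H; lia|]. rewrite IH, H; auto; lia. Qed.

Lemma runmax_ge x n t : (t <= n)%nat -> x t <= runmax x n.
Proof.
  induction n as [|n IH]; intros H; simpl; [replace t with 0%nat by lia; lra|].
  destruct (Nat.eq_dec t (S n)) as [->|]; [apply Rmax_r|].
  eapply Rle_trans; [apply IH; lia|apply Rmax_l].
Qed.

Lemma runmax_mono x i n : (i <= n)%nat -> runmax x i <= runmax x n.
Proof.
  induction n as [|n IH]; intros H; [replace i with 0%nat by lia; lra|].
  destruct (Nat.eq_dec i (S n)) as [->|]; [lra|].
  simpl; eapply Rle_trans; [apply IH; lia|apply Rmax_l].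
Qed.

Lemma runmax_nonneg x n : (forall t, 0 <= x t) -> 0 <= runmax x n.
Proof. intros H; eapply Rle_trans; [apply (H 0%nat)|apply runmax_ge; lia]. Qed.

(* A pathwise form of Doob's L^2 maximal inequality. *)
Lemma runmax_sq_le x n : (forall t, 0 <= x t) -> x 0%nat = 0 ->
  runmax x n * runmax x n
  <= 4 * (x n * x n) - 4 * rsum (fun i => runmax x i * (x (S i) - x i)) n.
Proof.
  intros Hx H0.
  assert (Hinv : x n <= runmax x n /\
    0 <= 4 * x n * runmax x n - 2 * (runmax x n * runmax x n)
         - 4 * rsum (fun i => runmax x i * (x (S i) - x i)) n).
  { induction n as [|n [H1 H2]]; simpl; [rewrite H0; lra|].
    pose proof (Hx n); pose proof (Hx (S n)).
    unfold Rmax; destruct (Rle_dec (runmax x n) (x (S n))); [|lra].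
    pose proof (Rle_0_sqr (x (S n) - runmax x n)); unfold Rsqr in *; lra. }
  destruct Hinv; pose proof (Rle_0_sqr (2 * x n - runmax x n)); unfold Rsqr in *; lra.
Qed.

Definition absTheta (z0 : pt) (xs : list nat) (t : nat) : R := Rabs (Theta z0 xs t).

Lemma supTheta2_runmax z0 xs n :
  supTheta2 z0 xs n = runmax (absTheta z0 xs) n * runmax (absTheta z0 xs) n.
Proof.
  assert (Hsq : forall r a, 0 <= r -> 0 <= a -> Rmax (r * r) (a ^ 2) = Rmax r a * Rmax r a)
    by (intros r a Hr Ha; unfold Rmax; destruct (Rle_dec r a); destruct (Rle_dec (r * r) (a ^ 2));
        simpl in *; nra).
  induction n as [|n IH].
  - unfold supTheta2, absTheta; simpl; rewrite Rabs_R0; ring.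
  - unfold supTheta2 in *; rewrite seq_S, fold_left_app, IH; cbn [fold_left runmax].
    replace (1 + n)%nat with (S n) by lia.
    apply Hsq; [apply runmax_nonneg; intro; apply Rabs_pos|apply Rabs_pos].
Qed.

Lemma Theta_sq z0 xs n : Theta z0 xs n * Theta z0 xs n =
  rsum (fun i => 2 * Theta z0 xs i * phi z0 xs (S i) + phi z0 xs (S i) * phi z0 xs (S i)) n.
Proof. induction n as [|n IH]; simpl; [ring|]. rewrite <- IH; ring. Qed.

Definition sup_increment (z0 : pt) (xs : list nat) (i : nat) : R :=
  8 * Theta z0 xs i * phi z0 xs (S i) + 4 * (phi z0 xs (S i) * phi z0 xs (S i))
  - 4 * runmax (absTheta z0 xs) i * (absTheta z0 xs (S i) - absTheta z0 xs i).

Lemma supTheta2_le_rsum z0 xs n : supTheta2 z0 xs n <= rsum (sup_increment z0 xs) n.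
Proof.
  rewrite supTheta2_runmax.
  eapply Rle_trans; [apply runmax_sq_le; [intro; apply Rabs_pos|unfold absTheta; simpl; apply Rabs_R0]|].
  replace (absTheta z0 xs n * absTheta z0 xs n) with (Theta z0 xs n * Theta z0 xs n)
    by (unfold absTheta; rewrite <- Rabs_mult, Rabs_right; [reflexivity|apply Rle_ge; nra]).
  rewrite Theta_sq, (rsum_ext (sup_increment z0 xs)
    (fun t => 4 * (2 * Theta z0 xs t * phi z0 xs (S t) + phi z0 xs (S t) * phi z0 xs (S t))
              - 4 * (runmax (absTheta z0 xs) t * (absTheta z0 xs (S t) - absTheta z0 xs t))))
    by (intros; unfold sup_increment; ring).
  rewrite rsum_minus, !rsum_scal; lra.
Qed.

Lemma avg4_sup_increment_le Th M (a : nat -> R) : Rabs Th <= M ->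
  avg4 (fun d => 8 * Th * a d + 4 * (a d * a d) - 4 * M * (Rabs (Th + a d) - Rabs Th))
  <= 12 * M * Rabs (avg4 a) + 4 * avg4 (fun d => a d * a d).
Proof.
  intros HTh; unfold avg4.
  set (D := (a 0%nat + a 1%nat + a 2%nat + a 3%nat) / 4).
  assert (Hconv : Rabs (Th + D) <= (Rabs (Th + a 0%nat) + Rabs (Th + a 1%nat)
                                    + Rabs (Th + a 2%nat) + Rabs (Th + a 3%nat)) / 4).
  { replace (Th + D) with (((Th + a 0%nat) + (Th + a 1%nat) + (Th + a 2%nat) + (Th + a 3%nat)) / 4)
      by (unfold D; field).
    unfold Rdiv; rewrite Rabs_mult, (Rabs_right (/ 4)) by lra.
    apply Rmult_le_compat_r; [lra|].
    repeat (eapply Rle_trans; [apply Rabs_triang|apply Rplus_le_compat_r]); apply Rle_refl. }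
  assert (Hrev : Rabs Th - Rabs D <= Rabs (Th + D)).
  { pose proof (Rabs_triang (Th + D) (- D)) as H.
    replace (Th + D + - D) with Th in H by ring; rewrite Rabs_Ropp in H; lra. }
  assert (HTD : Th * D <= M * Rabs D).
  { eapply Rle_trans; [apply Rle_abs|]; rewrite Rabs_mult.
    apply Rmult_le_compat_r; [apply Rabs_pos|assumption]. }
  assert (0 <= M) by (pose proof (Rabs_pos Th); lra).
  assert (M * (Rabs Th - Rabs D) <= M * ((Rabs (Th + a 0%nat) + Rabs (Th + a 1%nat)
                                          + Rabs (Th + a 2%nat) + Rabs (Th + a 3%nat)) / 4))
    by (apply Rmult_le_compat_l; lra).
  pose proof (Rabs_pos D); unfold D in *; nra.
Qed.

Lemma runmax_absTheta_firstn z0 xs i :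
  runmax (absTheta z0 (firstn i xs)) i = runmax (absTheta z0 xs) i.
Proof. apply runmax_ext; intros; unfold absTheta; rewrite Theta_firstn; auto. Qed.

(* Conditionally on the first [i] steps, the next angle increment has mean
   [mean_angle (S_i)] and second moment [mean_angle_sq (S_i)]. *)
Lemma Expect_sup_increment_le z0 n i : (i < n)%nat ->
  Expect n (fun xs => sup_increment z0 xs i) <=
  Expect n (fun xs => 12 * runmax (absTheta z0 xs) n * Rabs (mean_angle (walk z0 xs i))
                      + 4 * mean_angle_sq (walk z0 xs i)).
Proof.
  intros Hi; replace n with (i + S (n - i - 1))%nat by lia; set (m := (n - i - 1)%nat).
  set (U := fun (p : list nat) (M : R) =>
              12 * M * Rabs (mean_angle (walk z0 p i)) + 4 * mean_angle_sq (walk z0 p i)).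
  rewrite (Expect_firstn_nth i m _ (fun p d =>
    let y := walk z0 p i in let a := angle y (padd y (step d)) in
    8 * Theta z0 p i * a + 4 * (a * a)
    - 4 * runmax (absTheta z0 p) i * (Rabs (Theta z0 p i + a) - Rabs (Theta z0 p i)))).
  2: { intros xs Hl; cbv zeta; rewrite runmax_absTheta_firstn; unfold sup_increment, absTheta.
       change (Theta z0 xs (S i)) with (Theta z0 xs i + phi z0 xs (S i)).
       rewrite walk_firstn, !Theta_firstn, phi_angle, walk_S by lia; reflexivity. }
  apply Rle_trans with (Expect i (fun p => U p (runmax (absTheta z0 p) i))).
  - apply Expect_le; intro p; cbv zeta.
    apply avg4_sup_increment_le; apply (runmax_ge (absTheta z0 p)); lia.
  - rewrite <- (Expect_firstn i (S m) (fun xs => U (firstn i xs) (runmax (absTheta z0 (firstn i xs)) i))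
                  (fun p => U p (runmax (absTheta z0 p) i))) by auto.
    apply Expect_le_length; intros xs Hl; unfold U.
    rewrite runmax_absTheta_firstn, walk_firstn by lia.
    apply Rplus_le_compat_r, Rmult_le_compat_r; [apply Rabs_pos|].
    apply Rmult_le_compat_l; [lra|apply runmax_mono; lia].
Qed.

Lemma Expect_supTheta2_le z0 n :
  Expect n (fun xs => supTheta2 z0 xs n) <=
  144 * addfun_msq (fun z => Rabs (mean_angle z)) n z0 + 8 * rsum (fun t => Pt t mean_angle_sq z0) n.
Proof.
  set (E := Expect n (fun xs => supTheta2 z0 xs n)).
  set (Y := addfun (fun z => Rabs (mean_angle z)) n z0).
  assert (H1 : E <= Expect n (fun xs => 12 * runmax (absTheta z0 xs) n * Y xs
                                       + 4 * addfun mean_angle_sq n z0 xs)).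
  { eapply Rle_trans; [apply Expect_le; intro xs; apply supTheta2_le_rsum|].
    rewrite Expect_rsum; eapply Rle_trans;
      [apply rsum_le; intros t Ht; apply Expect_sup_increment_le; auto|].
    rewrite <- Expect_rsum; apply Req_le, Expect_ext; intro xs.
    unfold Y, addfun; rewrite rsum_plus, <- !rsum_scal; reflexivity. }
  assert (H2 : E <= Expect n (fun xs => 1 / 2 * supTheta2 z0 xs n
                                       + (72 * (Y xs * Y xs) + 4 * addfun mean_angle_sq n z0 xs))).
  { eapply Rle_trans; [apply H1|]; apply Expect_le; intro xs; rewrite supTheta2_runmax.
    pose proof (Rle_0_sqr (runmax (absTheta z0 xs) n - 12 * Y xs)); unfold Rsqr in *; lra. }
  rewrite !Expect_plus, !Expect_scal in H2; fold E in H2.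
  change (Expect n (addfun mean_angle_sq n z0)) with (addfun_mean mean_angle_sq n z0) in H2.
  rewrite addfun_mean_eq in H2; unfold addfun_msq; fold Y; lra.
Qed.

Lemma ln_1_plus_INR_mono j n : (j <= n)%nat -> ln (1 + INR j) <= ln (1 + INR n).
Proof. intros H; apply le_INR in H; pose proof (pos_INR j); apply ln_le; lra. Qed.

Lemma Expect_supTheta2_log_bound z0 n :
  let a := ln (1 + INR n) in let l := ln (1 + 2 * INR n) in
  Expect n (fun xs => supTheta2 z0 xs n)
  <= 288 * ((50000 * a) * (50000 * a)) + 8 * (24 * (5 * (l * l) + 10) + 200000 * a).
Proof.
  intros a l; set (K := 50000 * a).
  assert (HK : forall j y, (j <= n)%nat -> addfun_mean (fun z => Rabs (mean_angle z)) j y <= K).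
  { intros j y Hj; rewrite addfun_mean_eq; eapply Rle_trans; [apply rsum_Pt_mean_angle_abs|].
    apply Rmult_le_compat_l; [lra|apply ln_1_plus_INR_mono; auto]. }
  pose proof (addfun_msq_le _ n K (fun z => Rabs_pos _) HK n z0 (le_n n)).
  pose proof (HK n z0 (le_n n)).
  pose proof (addfun_mean_nonneg (fun z => Rabs (mean_angle z)) n z0 (fun z => Rabs_pos _)).
  pose proof (rsum_Pt_mean_angle_sq n z0) as Hsq; cbv zeta in Hsq; fold a l in Hsq.
  pose proof (Expect_supTheta2_le z0 n).
  assert (addfun_msq (fun z => Rabs (mean_angle z)) n z0 <= 2 * (K * K)) by nra.
  unfold K in *; lra.
Qed.

Theorem lemmaA1 :
  exists C : R, forall (z0 : pt), z0 <> (0, 0) -> forall n : nat, (2 <= n)%nat ->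
    Expect n (fun xs => supTheta2 z0 xs n) <= C * (ln (INR n)) ^ 2.
Proof.
  exists (10 ^ 13); intros z0 _ n Hn.
  pose proof (Expect_supTheta2_log_bound z0 n) as H; cbv zeta in H.
  assert (Hn2 : 2 <= INR n) by (apply le_INR in Hn; simpl in Hn; lra).
  set (L := ln (INR n)).
  assert (HL : / 2 < L) by (pose proof ln_lt_2; pose proof (ln_le 2 (INR n)); unfold L; lra).
  assert (Ha : ln (1 + INR n) <= 2 * L).
  { unfold L; rewrite <- (Rplus_diag (ln (INR n))), <- ln_mult by lra; apply ln_le; nra. }
  assert (Hl : ln (1 + 2 * INR n) <= 3 * L).
  { unfold L; replace (3 * ln (INR n)) with (ln (INR n) + ln (INR n) + ln (INR n)) by ring.
    rewrite <- !ln_mult by nra; apply ln_le; nra. }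
  assert (0 <= ln (1 + INR n)) by (rewrite <- ln_1; apply ln_le; lra).
  assert (0 <= ln (1 + 2 * INR n)) by (rewrite <- ln_1; apply ln_le; lra).
  set (a := ln (1 + INR n)) in *; set (l := ln (1 + 2 * INR n)) in *.
  assert (a * a <= 4 * (L * L)) by nra; assert (l * l <= 9 * (L * L)) by nra.
  replace (L ^ 2) with (L * L) by ring; nra.
Qed.
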